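(* Let $\delta\in\{0,1\}$ and let $b,\ell,u$ be nonnegative integers. There exists a set $\mathfrak{B}$ of integer $2\times3$ matrices which is the disjoint union of two subsets $\mathfrak{B}'$ and $\mathfrak{B}''$ with $|\mathfrak{B}'|=2\ell$ and $|\mathfrak{B}''|=2u$, such that $\sigma_r(M)=(0,0)$ and $\sigma_c(M)=(-2,1,1)$ for all $M\in\mathfrak{B}'$, $\sigma_r(M)=(0,0)$ and $\sigma_c(M)=(-4,2,2)$ for all $M\in\mathfrak{B}''$, and the multiset of absolute values of all entries of all matrices in $\mathfrak{B}$ is exactly the set $$[2b+1,2b+8u+8\ell-1]_2\cup[2b+8u+8\ell+\delta,2b+12u+12\ell+\delta-1]\cup[4b+12u+12\ell+\delta,4b+16u+16\ell+\delta-1]$$ (each element occurring once).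
   Context: For integers $a\equiv b\pmod d$ with $d\geqslant1$, $[a,b]_d=\{a+id: 0\leqslant i\leqslant (b-a)/d\}$ if $a\leqslant b$ and $[a,b]_d=\varnothing$ if $a>b$; $[a,b]=[a,b]_1$. For a matrix $M$, $\sigma_r(M)$ is the sequence of its row sums and $\sigma_c(M)$ the sequence of its column sums. *)

From mathcomp Require Import all_boot all_order all_algebra.
Set Implicit Arguments. Unset Strict Implicit. Unset Printing Implicit Defensive.
Import Order.TTheory GRing.Theory Num.Theory.
Local Open Scope ring_scope.

Definition ivl_step (a b : int) (d : nat) : seq int :=
  if a <= b then [seq a + (i%:Z * d%:Z) | i <- iota 0 (`|b - a|%N %/ d).+1]
  else [::].

Definition ivl (a b : int) : seq int := ivl_step a b 1.

Definition sigma_r (m n : nat) (M : 'M[int]_(m, n)) : seq int :=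
  [seq \sum_(j < n) M i j | i <- enum 'I_m].
Definition sigma_c (m n : nat) (M : 'M[int]_(m, n)) : seq int :=
  [seq \sum_(i < m) M i j | j <- enum 'I_n].

Definition abs_entries (m n : nat) (M : 'M[int]_(m, n)) : seq int :=
  [seq `|M i j| | i <- enum 'I_m, j <- enum 'I_n].

From mathcomp Require Import all_boot all_order all_algebra.
From mathcomp Require Import zify.
Set Implicit Arguments. Unset Strict Implicit. Unset Printing Implicit Defensive.
Import Order.TTheory GRing.Theory Num.Theory.
Local Open Scope ring_scope.

(* The 12(l+u) prescribed values split into l+u blocks: block j takes four
   consecutive odd numbers a, a+2, a+4, a+6, four consecutive integers c, ..., c+3
   of the middle interval and d, ..., d+3 of the top interval, where d = a + c + 3.
   Putting them into matrices with sign pattern [[+, +, -], [-, -, +]] so that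
   each row reads x + y = z (e.g. a + (c+3) = d) makes all row sums vanish;
   stacking the odd numbers in the first column of the two matrices as
   (a over a+2, a+4 over a+6) or as (a over a+4, a+2 over a+6) gives column sums
   (-2,1,1) or (-4,2,2).  As a and d run upwards with j (in steps 8 and 4),
   c = d - a - 3 runs downwards. *)

Section Progressions.
Local Open Scope nat_scope.

Definition aprog (x s k : nat) : seq nat := [seq x + i * s | i <- iota 0 k].

Lemma aprog4 x s : aprog x s 4 = [:: x; x + s; x + 2 * s; x + 3 * s].
Proof. by rewrite /aprog /= mul0n addn0 mul1n. Qed.

Lemma aprogD x s k1 k2 :
  aprog x s (k1 + k2) = aprog x s k1 ++ aprog (x + k1 * s) s k2.
Proof.
rewrite /aprog iotaD map_cat add0n; congr (_ ++ _).
rewrite -{1}[k1]addn0 iotaDl -map_comp; apply: eq_map => i /=.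
by rewrite mulnDl addnA.
Qed.

Lemma flatten_aprog x s k n :
  flatten [seq aprog (x + j * (k * s)) s k | j <- iota 0 n] = aprog x s (n * k).
Proof.
elim: n => [|n IHn]; first by rewrite /aprog.
by rewrite -addn1 iotaD map_cat flatten_cat IHn /= cats0 add0n mulnDl mul1n aprogD mulnA.
Qed.

Lemma mem_aprog x s k y : y \in aprog x s k -> (x <= y) && (y + s <= x + k * s).
Proof. by move=> /mapP[i]; rewrite mem_iota => /andP[_ ik] ->; nia. Qed.

Lemma aprog_uniq x s k : 0 < s -> uniq (aprog x s k).
Proof.
move=> s_gt0; rewrite map_inj_uniq ?iota_uniq // => i j /eqP.
by rewrite eqn_add2l eqn_mul2r gtn_eqF // => /eqP.
Qed.

End Progressions.

Lemma ivl_step_aprog (lo hi : int) (x s k : nat) : (0 < s)%N ->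
  lo = x%:Z -> hi = (x + k * s)%N%:Z - s%:Z -> ivl_step lo hi s = map Posz (aprog x s k).
Proof.
move=> s_gt0 -> ->; rewrite /ivl_step; case: k => [|k].
  by rewrite ifF //; lia.
have -> : (x + k.+1 * s)%N%:Z - s%:Z - x%:Z = (k * s)%N%:Z by lia.
rewrite ifT; last by lia.
rewrite mulnK // -map_comp; apply: eq_map => i /=; lia.
Qed.

Lemma rev_iota0 n : rev (iota 0 n) = [seq n.-1 - j | j <- iota 0 n]%N.
Proof.
elim: n => [|n IHn] //.
rewrite -{1}addn1 iotaD rev_cat IHn /= (iotaDl 1 0) -map_comp.
congr (_ :: _); first by rewrite add0n subn0.
by apply: eq_map => j /=; rewrite subnDA subn1.
Qed.

Lemma perm_flatten_map_cat (T U : eqType) (f g : T -> seq U) s :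
  perm_eq (flatten [seq f x ++ g x | x <- s]) (flatten (map f s) ++ flatten (map g s)).
Proof.
elim: s => [|x s IHs] //=.
by rewrite -!catA perm_cat2l perm_sym perm_catCA perm_cat2l perm_sym.
Qed.

Lemma uniq_flatten_map (T U : eqType) (f : T -> seq U) s :
  (forall x, f x != [::]) -> uniq (flatten (map f s)) -> uniq s.
Proof.
move=> f_nil; elim: s => [|x s IHs] //=; rewrite cat_uniq => /and3P[_ f_s u_s].
rewrite IHs // andbT; apply: contra f_s => xs.
case fx: (f x) (f_nil x) => [|y ys] // _; apply/hasP; exists y; last exact: mem_head.
by apply/flatten_mapP; exists x; rewrite // fx mem_head.
Qed.

Lemma size_flatten_map_const (T U : Type) (f : T -> seq U) k s :
  (forall x, size (f x) = k) -> size (flatten (map f s)) = (k * size s)%N.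
Proof.
by move=> size_f; elim: s => [|x s IHs] /=; rewrite ?muln0 // size_cat IHs size_f mulnS.
Qed.

Lemma perm_nth_pattern (T : eqType) (x0 : T) s p :
  perm_eq p (iota 0 (size s)) -> perm_eq (map (nth x0 s) p) s.
Proof. by move/(perm_map (nth x0 s)); rewrite map_nth_iota0 // take_size. Qed.

Definition signed_mx (x0 x1 x2 y0 y1 y2 : nat) : 'M[int]_(2, 3) :=
  \matrix_(i < 2, j < 3)
    nth 0 (nth [::] [:: [:: x0%:Z; x1%:Z; - x2%:Z]; [:: - y0%:Z; - y1%:Z; y2%:Z]] i) j.

Lemma sigma_r_signed_mx x0 x1 x2 y0 y1 y2 :
  sigma_r (signed_mx x0 x1 x2 y0 y1 y2) =
    [:: x0%:Z + x1%:Z - x2%:Z; - y0%:Z - y1%:Z + y2%:Z].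
Proof.
by rewrite /sigma_r !enum_ordSl enum_ord0 /= !big_ord_recr !big_ord0 /= !mxE !add0r.
Qed.

Lemma sigma_c_signed_mx x0 x1 x2 y0 y1 y2 :
  sigma_c (signed_mx x0 x1 x2 y0 y1 y2) =
    [:: x0%:Z - y0%:Z; x1%:Z - y1%:Z; - x2%:Z + y2%:Z].
Proof.
by rewrite /sigma_c !enum_ordSl enum_ord0 /= !big_ord_recr !big_ord0 /= !mxE !add0r.
Qed.

Lemma abs_entries_signed_mx x0 x1 x2 y0 y1 y2 :
  abs_entries (signed_mx x0 x1 x2 y0 y1 y2) = map Posz [:: x0; x1; x2; y0; y1; y2].
Proof. by rewrite /abs_entries !enum_ordSl enum_ord0 /= !mxE /= !normrN. Qed.

Section Pairs.
Variables a c : nat.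
Local Notation d := (a + c + 3)%N.

Definition narrow_pair : seq 'M[int]_(2, 3) :=
  [:: signed_mx a (c + 3) d (a + 2) (c + 2) (d + 1);
      signed_mx (a + 4) (c + 1) (d + 2) (a + 6) c (d + 3)].

Definition wide_pair : seq 'M[int]_(2, 3) :=
  [:: signed_mx a (c + 3) d (a + 4) (c + 1) (d + 2);
      signed_mx (a + 2) (c + 2) (d + 1) (a + 6) c (d + 3)].

Definition block_vals : seq nat := aprog a 2 4 ++ aprog c 1 4 ++ aprog d 1 4.

Lemma narrow_pair_sums M : M \in narrow_pair ->
  sigma_r M = [:: 0; 0] /\ sigma_c M = [:: -2; 1; 1].
Proof.
rewrite !inE => /orP[]/eqP->; rewrite sigma_r_signed_mx sigma_c_signed_mx;
  by split; do ![congr (_ :: _)]; lia.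
Qed.

Lemma wide_pair_sums M : M \in wide_pair ->
  sigma_r M = [:: 0; 0] /\ sigma_c M = [:: -4; 2; 2].
Proof.
rewrite !inE => /orP[]/eqP->; rewrite sigma_r_signed_mx sigma_c_signed_mx;
  by split; do ![congr (_ :: _)]; lia.
Qed.

Lemma perm_narrow_pair_abs :
  perm_eq (flatten [seq abs_entries M | M <- narrow_pair]) (map Posz block_vals).
Proof.
have := @perm_nth_pattern _ 0%N block_vals [:: 0; 7; 8; 1; 6; 9; 2; 5; 10; 3; 4; 11]%N isT.
move=> /(perm_map Posz); rewrite /block_vals !aprog4 => vals_perm.
by rewrite /= !abs_entries_signed_mx cats0 -!map_cat; exact: vals_perm.
Qed.

Lemma perm_wide_pair_abs :
  perm_eq (flatten [seq abs_entries M | M <- wide_pair]) (map Posz block_vals).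
Proof.
have := @perm_nth_pattern _ 0%N block_vals [:: 0; 7; 8; 2; 5; 10; 1; 6; 9; 3; 4; 11]%N isT.
move=> /(perm_map Posz); rewrite /block_vals !aprog4 => vals_perm.
by rewrite /= !abs_entries_signed_mx cats0 -!map_cat; exact: vals_perm.
Qed.

End Pairs.

Lemma perm_abs_flatten (I : Type) m n (mxs : I -> seq 'M[int]_(m, n))
    (vals : I -> seq nat) s :
  (forall i, perm_eq (flatten [seq abs_entries M | M <- mxs i]) (map Posz (vals i))) ->
  perm_eq (flatten [seq abs_entries M | M <- flatten (map mxs s)])
          (map Posz (flatten (map vals s))).
Proof.
move=> mxs_perm; elim: s => [|i s IHs] //=.
by rewrite !map_cat flatten_cat; apply: perm_cat.
Qed.

Section Construction.
Variables delta b l u : nat.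
Local Notation n := (l + u)%N.

Definition odd_base j := (2 * b + 1 + j * 8)%N.
Definition mid_base j := (2 * b + 8 * n + delta + (n.-1 - j) * 4)%N.

Definition narrow_family :=
  flatten [seq narrow_pair (odd_base j) (mid_base j) | j <- iota 0 l].
Definition wide_family :=
  flatten [seq wide_pair (odd_base j) (mid_base j) | j <- iota l u].

Definition entry_values : seq nat :=
  aprog (2 * b + 1) 2 (n * 4) ++ aprog (2 * b + 8 * n + delta) 1 (n * 4)
  ++ aprog (4 * b + 12 * n + delta) 1 (n * 4).

Lemma perm_block_vals :
  perm_eq (flatten [seq block_vals (odd_base j) (mid_base j) | j <- iota 0 n]) entry_values.
Proof.
pose odd_run j := aprog (odd_base j) 2 4; pose mid_run j := aprog (mid_base j) 1 4.
pose top_run j := aprog (odd_base j + mid_base j + 3) 1 4.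
have odd_runs : flatten (map odd_run (iota 0 n)) = aprog (2 * b + 1) 2 (n * 4).
  exact: (flatten_aprog _ 2 4 n).
have mid_runs : perm_eq (flatten (map mid_run (iota 0 n)))
                        (aprog (2 * b + 8 * n + delta) 1 (n * 4)).
  rewrite -flatten_aprog (_ : map _ _ =
    rev [seq aprog (2 * b + 8 * n + delta + j * (4 * 1)) 1 4 | j <- iota 0 n]).
    by apply: perm_flatten; rewrite perm_rev.
  by rewrite -map_rev rev_iota0 -map_comp.
have top_runs : flatten (map top_run (iota 0 n)) = aprog (4 * b + 12 * n + delta) 1 (n * 4).
  rewrite -flatten_aprog; congr flatten; apply/eq_in_map => j.
  by rewrite mem_iota => /andP[_ jn]; congr aprog; rewrite /odd_base /mid_base; lia.
apply: perm_trans (perm_flatten_map_cat odd_run (fun j => mid_run j ++ top_run j) _) _.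
rewrite odd_runs perm_cat2l; apply: perm_trans (perm_flatten_map_cat mid_run top_run _) _.
by rewrite top_runs perm_cat2r.
Qed.

Lemma perm_families_abs :
  perm_eq (flatten [seq abs_entries M | M <- narrow_family ++ wide_family])
          (map Posz entry_values).
Proof.
apply: perm_trans (perm_map Posz perm_block_vals).
rewrite map_cat flatten_cat iotaD map_cat flatten_cat map_cat add0n.
apply: perm_cat; apply: perm_abs_flatten => j.
  exact: perm_narrow_pair_abs.
exact: perm_wide_pair_abs.
Qed.

Lemma entry_values_uniq : uniq entry_values.
Proof.
rewrite /entry_values !cat_uniq has_cat negb_or !aprog_uniq //= andbT -andbA.
by apply/and3P; split; apply/hasPn => y /mem_aprog y_run; apply/negP => /mem_aprog; lia.
Qed.

Lemma intervals_entry_values :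
  ivl_step (2 * b%:Z + 1) (2 * b%:Z + 8 * u%:Z + 8 * l%:Z - 1) 2
  ++ ivl (2 * b%:Z + 8 * u%:Z + 8 * l%:Z + delta%:Z)
         (2 * b%:Z + 12 * u%:Z + 12 * l%:Z + delta%:Z - 1)
  ++ ivl (4 * b%:Z + 12 * u%:Z + 12 * l%:Z + delta%:Z)
         (4 * b%:Z + 16 * u%:Z + 16 * l%:Z + delta%:Z - 1)
  = map Posz entry_values.
Proof.
by rewrite !map_cat; congr (_ ++ _ ++ _); apply: ivl_step_aprog => //; lia.
Qed.

End Construction.

Theorem lemma2p4 (delta b l u : nat) (hdelta : (delta <= 1)%N) :
  exists (B1 B2 : seq 'M[int]_(2, 3)),
    [/\ uniq (B1 ++ B2) /\ size B1 = (2 * l)%N,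
        size B2 = (2 * u)%N,
        (forall M, M \in B1 -> sigma_r M = [:: 0; 0] /\ sigma_c M = [:: -2; 1; 1]),
        (forall M, M \in B2 -> sigma_r M = [:: 0; 0] /\ sigma_c M = [:: -4; 2; 2]) &
        perm_eq (flatten [seq abs_entries M | M <- B1 ++ B2])
          (ivl_step (2 * b%:Z + 1) (2 * b%:Z + 8 * u%:Z + 8 * l%:Z - 1) 2
           ++ ivl (2 * b%:Z + 8 * u%:Z + 8 * l%:Z + delta%:Z)
                  (2 * b%:Z + 12 * u%:Z + 12 * l%:Z + delta%:Z - 1)
           ++ ivl (4 * b%:Z + 12 * u%:Z + 12 * l%:Z + delta%:Z)
                  (4 * b%:Z + 16 * u%:Z + 16 * l%:Z + delta%:Z - 1))].
Proof.
(* The construction works for every delta. *)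
exists (narrow_family delta b l u), (wide_family delta b l u).
have abs_perm := perm_families_abs delta b l u.
rewrite intervals_entry_values; split; last exact: abs_perm.
- split; last by rewrite (@size_flatten_map_const _ _ _ 2) ?size_iota.
  apply: (@uniq_flatten_map _ _ (@abs_entries 2 3)) => [M|].
    by rewrite /abs_entries !enum_ordSl.
  rewrite (perm_uniq abs_perm) (map_inj_uniq (can_inj absz_nat)).
  exact: entry_values_uniq.
- by rewrite (@size_flatten_map_const _ _ _ 2) ?size_iota.
- by move=> M /flatten_mapP[j _]; apply: narrow_pair_sums.
- by move=> M /flatten_mapP[j _]; apply: wide_pair_sums.
Qed.
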